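(* Let $K,L$ be Markov kernels on a measurable space $S$, and let $(K^{(n)})_{n\ge2}$ and $(L^{(n)})_{n\ge2}$ be consistent extensions of $K$ and $L$ respectively. Then $(K^{(n)}L^{(n)})_{n\ge2}$ is a consistent extension of $KL$.
   Context: Composition: $(KL)(x,B)=\int L(y,B)K(x,dy)$. For $i_1,\dots,i_k\in\{1,\dots,n\}$ (repetitions allowed), $\pi^n_{i_1,\dots,i_k}(x_1,\dots,x_n)=(x_{i_1},\dots,x_{i_k})$. A family $(K^{(n)})_{n\ge1}$, $K^{(n)}$ a Markov kernel on $S^n$ with the product $\sigma$-algebra, is consistent if $K^{(n)}(\mathbf{x},(\pi^n_{i_1,\dots,i_k})^{-1}(B))=K^{(k)}(\pi^n_{i_1,\dots,i_k}(\mathbf{x}),B)$ for all $1\le k\le n$, all $i_1,\dots,i_k$, all $\mathbf{x}\in S^n$ and measurable $B\subset S^k$. A family $(K^{(n)})_{n\ge2}$ is a consistent extension of a kernel $K$ on $S$ if $(K^{(n)})_{n\ge1}$ with $K^{(1)}=K$ is consistent. *)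

From HB Require Import structures.
From mathcomp Require Import all_boot all_order all_algebra.
From mathcomp Require Import all_classical all_reals all_analysis.
Set Implicit Arguments. Unset Strict Implicit. Unset Printing Implicit Defensive.
Import Order.TTheory GRing.Theory Num.Theory.
Local Open Scope classical_set_scope.
Local Open Scope ring_scope.
Local Open Scope ereal_scope.

Section Defs.
Context {R : realType} {d : measure_display} {S : measurableType d}.

(* S^n is modelled as n.-tuple S, with the library's product sigma-algebra
   (generated by the coordinate projections). *)

Definition proj (n k : nat) (i : k.-tuple 'I_n) (x : n.-tuple S) : k.-tuple S :=
  map_tuple (tnth x) i.

Definition kcompose {d' : measure_display} {X : measurableType d'}
    (k l : X -> {measure set X -> \bar R}) : X -> set X -> \bar R :=
  fun x B => \int[k x]_y l y B.

Definition consistent (F : forall n, n.-tuple S -> set (n.-tuple S) -> \bar R) :=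
  forall (n k : nat), (1 <= k <= n)%N ->
  forall (i : k.-tuple 'I_n) (x : n.-tuple S) (B : set (k.-tuple S)),
    measurable B -> F n x (proj i @^-1` B) = F k (proj i x) B.

Definition lift1 (k : S -> set S -> \bar R) : 1.-tuple S -> set (1.-tuple S) -> \bar R :=
  fun x B => k (thead x) [set s | B [tuple s]].

(* the family (F^(n))_{n>=1} with F^(1) = k and F^(n+2) = F n;
   the value at n = 0 is irrelevant (never used by [consistent]) *)
Definition extfam (k : S -> set S -> \bar R)
    (F : forall n, n.+2.-tuple S -> set (n.+2.-tuple S) -> \bar R) :
    forall n, n.-tuple S -> set (n.-tuple S) -> \bar R :=
  fun n => match n as n0 return n0.-tuple S -> set (n0.-tuple S) -> \bar R with
           | 0%N => fun _ _ => 0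
           | 1%N => lift1 k
           | m.+2 => F m
           end.

Definition consistent_extension (k : S -> set S -> \bar R)
    (F : forall n, n.+2.-tuple S -> set (n.+2.-tuple S) -> \bar R) :=
  consistent (extfam k F).

Definition is_markov_kernel {d' : measure_display} {X : measurableType d'}
    (f : X -> set X -> \bar R) :=
  exists P : R.-pker X ~> X, forall x B, measurable B -> P x B = f x B.

End Defs.

From Pilot Require Import Defs.
From HB Require Import structures.
From mathcomp Require Import all_boot all_order all_algebra.
From mathcomp Require Import all_classical all_reals all_analysis.
From mathcomp Require Import measurable_realfun.
Local Open Scope classical_set_scope.
Local Open Scope ring_scope.
Local Open Scope ereal_scope.

(* Consistency says that every coordinate projection f = pi_{i_1..i_k}
   intertwines K^(n) with K^(k):  K^(n)(x, f^-1 A) = K^(k)(f x, A).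
   Intertwining is preserved by composition of kernels: by the change of
   variables formula for the image measure of K^(n)(x, .) under f,
     \int L^(n)(y, f^-1 B) K^(n)(x,dy) = \int L^(k)(f y, B) K^(n)(x,dy)
                                       = \int L^(k)(z, B) K^(k)(f x,dz).
   For k = 1 the projection is read through the identification S = S^1. *)

Definition intertwines {d1 d2} {X : measurableType d1} {Y : measurableType d2}
    {R : realType} (f : X -> Y)
    (k : X -> set X -> \bar R) (k' : Y -> set Y -> \bar R) :=
  forall x A, measurable A -> k x (f @^-1` A) = k' (f x) A.

Lemma ge0_integral_transfer d1 d2 (X : measurableType d1)
    (Y : measurableType d2) (R : realType)
    (mu : {measure set X -> \bar R}) (nu : {measure set Y -> \bar R})
    (f : X -> Y) (g : Y -> \bar R) :
  measurable_fun setT f -> measurable_fun setT g -> (forall y, 0 <= g y) ->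
  (forall A, measurable A -> mu (f @^-1` A) = nu A) ->
  \int[mu]_x g (f x) = \int[nu]_y g y.
Proof.
move=> mf mg g0 munu.
rewrite (eq_measure_integral (pushforward mu f)) => [|A mA _]; last first.
  by rewrite -munu.
by rewrite [RHS]ge0_integral_pushforward // preimage_setT.
Qed.

Lemma kcompose_intertwines d1 d2 (X : measurableType d1)
    (Y : measurableType d2) (R : realType) (f : X -> Y)
    (K L : X -> {measure set X -> \bar R}) (K' : Y -> {measure set Y -> \bar R})
    (L' : R.-ker Y ~> Y) :
  measurable_fun setT f ->
  intertwines f (fun x A => K x A) (fun y A => K' y A) ->
  intertwines f (fun x A => L x A) (fun y A => L' y A) ->
  intertwines f (kcompose K L) (kcompose K' L').
Proof.
move=> mf fK fL x B mB; rewrite /kcompose.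
under eq_integral do rewrite fL //.
apply: (@ge0_integral_transfer _ _ _ _ _ _ _ f (fun z => L' z B)) => //.
- exact: measurable_kernel.
- by move=> A mA; exact: fK.
Qed.

Section probability_kcompose.
Context d (T : measurableType d) (R : realType) (k1 k2 : R.-pker T ~> T).

Let mkcomp_noparam_setT x : mkcomp_noparam k1 k2 x setT = 1.
Proof.
rewrite /= /kcomp_noparam.
under eq_integral do rewrite prob_kernel.
by rewrite integral_cst // mul1e prob_kernel.
Qed.

HB.instance Definition _ :=
  Kernel_isProbability.Build _ _ _ _ _ (mkcomp_noparam k1 k2) mkcomp_noparam_setT.

Lemma is_markov_kernel_kcompose : is_markov_kernel (kcompose k1 k2).
Proof. by exists (mkcomp_noparam k1 k2). Qed.

End probability_kcompose.

Section tuple_projections.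
Context {d : measure_display} {S : measurableType d}.

Lemma measurable_proj {n k} (i : k.-tuple 'I_n) :
  measurable_fun setT (Defs.proj i : n.-tuple S -> k.-tuple S).
Proof.
apply/measurable_fun_tnthP => j.
rewrite (_ : _ \o _ = @tnth n S ^~ (tnth i j)); first exact: measurable_tnth.
by apply/funext => y; rewrite /= /Defs.proj tnth_map.
Qed.

Lemma measurable_thead : measurable_fun setT (@thead 0 S).
Proof. exact: (measurable_tnth ord0). Qed.

Lemma measurable_tuple1 : measurable_fun setT (fun s : S => [tuple s]).
Proof.
apply/measurable_fun_tnthP => j.
rewrite (_ : _ \o _ = id); first exact: measurable_id.
by apply/funext => s; rewrite /= (ord1 j).
Qed.

Lemma tuple1_thead (t : 1.-tuple S) : [tuple thead t] = t.
Proof. by apply: eq_from_tnth => j; rewrite (ord1 j). Qed.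

Lemma proj_tuple1_id (i : 1.-tuple 'I_1) :
  Defs.proj i = id :> (1.-tuple S -> 1.-tuple S).
Proof.
apply/funext => x; apply: eq_from_tnth => j.
by rewrite /Defs.proj tnth_map (ord1 j) (ord1 (tnth i ord0)).
Qed.

Lemma intertwines_lift1 (R : realType) dX (X : measurableType dX)
    (f : X -> 1.-tuple S) (F : X -> set X -> \bar R) (k : S -> set S -> \bar R) :
  intertwines f F (lift1 k) <-> intertwines (@thead 0 S \o f) F k.
Proof.
split=> fFk x A mA.
- have mA1 : measurable (@thead 0 S @^-1` A).
    by rewrite -[_ @^-1` _]setTI; exact: measurable_thead.
  exact: (fFk x _ mA1).
- have mA1 : measurable [set s : S | A [tuple s]].
    by rewrite -[X in measurable X]setTI; exact: measurable_tuple1.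
  rewrite /lift1 -(fFk x _ mA1); congr (F x _); apply/funext => y.
  by rewrite /preimage /= tuple1_thead.
Qed.

End tuple_projections.

Theorem lemma6p2 (R : realType) (d : measure_display) (S : measurableType d)
  (K L : R.-pker S ~> S)
  (Kn Ln : forall n : nat, R.-pker (n.+2.-tuple S) ~> (n.+2.-tuple S)) :
  consistent_extension (fun x B => K x B) (fun n x B => Kn n x B) ->
  consistent_extension (fun x B => L x B) (fun n x B => Ln n x B) ->
  (forall n : nat, is_markov_kernel (kcompose (Kn n) (Ln n))) /\
  is_markov_kernel (kcompose K L) /\
  consistent_extension (kcompose K L) (fun n => kcompose (Kn n) (Ln n)).
Proof.
move=> HK HL; split; first by move=> n; exact: is_markov_kernel_kcompose.
split; first exact: is_markov_kernel_kcompose.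
move=> [|[|m]] [|[|k]] //= k_le_n i; rewrite -/(intertwines _ _ _).
- by rewrite proj_tuple1_id.
- apply/intertwines_lift1/kcompose_intertwines.
  + exact: measurableT_comp measurable_thead (measurable_proj _).
  + apply/intertwines_lift1; exact: (HK m.+2 1%N k_le_n i).
  + apply/intertwines_lift1; exact: (HL m.+2 1%N k_le_n i).
- apply: kcompose_intertwines; first exact: measurable_proj.
  + exact: (HK m.+2 k.+2 k_le_n i).
  + exact: (HL m.+2 k.+2 k_le_n i).
Qed.
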